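(* Let $d\ge1$ and $x,y,u,v\in\mathbb{R}^d_{>0}$, and set $a^\pm:=s^\pm(x,y)$, $b^\pm:=s^\pm(u,v)$. Then there exist $y^*,v^*\in\mathbb{R}^d_{>0}$ such that \[ F_d(x,y^*;u,v^* )\ge F_d(x,y;u,v),\qquad s^\pm(x,y^* )=s^\pm(x,y),\qquad s^\pm(u,v^* )=s^\pm(u,v), \] and for every $1\le i\le d$, $\frac{y^*_i}{x_i}\in\{a^-,a^+\}$ and $\frac{v^*_i}{u_i}\in\{b^-,b^+\}$.
   Context: For $x,y\in\mathbb{R}^d_{>0}$ define $s^+(x,y)=\max_i \frac{y_i}{x_i}$ and $s^-(x,y)=\min_i\frac{y_i}{x_i}$ (the statement $s^\pm(\cdot)=s^\pm(\cdot)$ means both the max and the min agree). Define $F_d:(\mathbb{R}^d_{>0})^4\to\mathbb{R}_{>0}$ by $F_d(x,y;u,v)=\frac{(x\cdot u)(y\cdot v)}{(x\cdot v)(y\cdot u)}$, where $\cdot$ is the standard Euclidean dot product. *)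

From mathcomp Require Import all_boot all_order all_algebra.
Set Implicit Arguments. Unset Strict Implicit. Unset Printing Implicit Defensive.
Import Order.TTheory GRing.Theory Num.Theory.
Local Open Scope ring_scope.

(* Vectors in R^d are functions 'I_d -> R; d >= 1 is encoded as d = n.+1. *)

Definition dotp (R : realFieldType) (d : nat) (x y : 'I_d -> R) : R :=
  \sum_(i < d) x i * y i.

Definition posvec (R : realFieldType) (d : nat) (x : 'I_d -> R) : Prop :=
  forall i, 0 < x i.

Definition splus (R : realFieldType) (n : nat) (x y : 'I_n.+1 -> R) : R :=
  \big[Num.max/(y ord0 / x ord0)]_(i < n.+1) (y i / x i).

Definition sminus (R : realFieldType) (n : nat) (x y : 'I_n.+1 -> R) : R :=
  \big[Num.min/(y ord0 / x ord0)]_(i < n.+1) (y i / x i).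

Definition Fd (R : realFieldType) (d : nat) (x y u v : 'I_d -> R) : R :=
  (dotp x u * dotp y v) / (dotp x v * dotp y u).

(* Write y_i = a_i x_i and v_i = b_i u_i. For fixed v, F_d depends on y only
   through a ratio P(a)/W(a) of two linear forms in a, and F_d is symmetric
   under (x,y) <-> (u,v), so for fixed y it depends on v only through such a
   ratio in b. A ratio of linear forms on a box does not decrease when each
   coordinate strictly inside [a^-, a^+] is pushed to a suitable endpoint;
   coordinates already at an endpoint are kept, so the extreme ratios are
   preserved. Doing this first for y and then for v gives y* and v*. *)
From mathcomp Require Import all_boot all_order all_algebra.
From mathcomp Require Import ring.
Import Order.TTheory GRing.Theory Num.Theory.
Local Open Scope ring_scope.

Section BigMaxMinOrd.
Context {disp : Order.disp_t} {T : orderType disp} {n : nat}.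
Implicit Types (F : 'I_n.+1 -> T) (m : T).
Local Open Scope order_scope.

Lemma bigmax_ord_attained F :
  exists j, \big[Order.max/F ord0]_(i < n.+1) F i = F j.
Proof.
apply: (big_ind (fun m => exists j, m = F j)); first by exists ord0.
- by move=> _ _ [i ->] [j ->]; case: (leP (F i) (F j)); [exists j | exists i].
- by move=> i _; exists i.
Qed.

Lemma bigmin_ord_attained F :
  exists j, \big[Order.min/F ord0]_(i < n.+1) F i = F j.
Proof.
apply: (big_ind (fun m => exists j, m = F j)); first by exists ord0.
- by move=> _ _ [i ->] [j ->]; case: (leP (F i) (F j)); [exists i | exists j].
- by move=> i _; exists i.
Qed.

Lemma bigmax_ord_eq F j m :
  (forall i, F i <= m) -> F j = m -> \big[Order.max/F ord0]_(i < n.+1) F i = m.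
Proof.
move=> Fm Fjm; apply: le_anti; rewrite -{2}Fjm le_bigmax andbT.
by apply/bigmax_leP; split=> [|i _]; apply: Fm.
Qed.

Lemma bigmin_ord_eq F j m :
  (forall i, m <= F i) -> F j = m -> \big[Order.min/F ord0]_(i < n.+1) F i = m.
Proof.
move=> mF Fjm; apply: le_anti; rewrite -{1}Fjm bigmin_le /=.
by apply/bigmin_geP; split=> [|i _]; apply: mF.
Qed.

End BigMaxMinOrd.

Section ExtremeProfile.
Context {R : realDomainType} {d : nat}.
Implicit Types (p w a : 'I_d -> R).

(* The linear form [c] vanishes at [a] and its value at [b] is the cross
   difference, so it suffices to choose [b] coordinatewise with [c b >= c a]. *)
Lemma exists_extreme_profile p w a (lo hi : R) :
  (forall i, lo <= a i <= hi) ->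
  exists b : 'I_d -> R,
    [/\ forall i, b i = lo \/ b i = hi,
        forall i, a i = lo -> b i = lo,
        forall i, a i = hi -> b i = hi &
        (\sum_i p i * a i) * (\sum_i w i * b i) <=
        (\sum_i p i * b i) * (\sum_i w i * a i)].
Proof.
move=> a_bound.
set Pa := \sum_i p i * a i; set Wa := \sum_i w i * a i.
pose c i := p i * Wa - Pa * w i.
have c_sum f :
    \sum_i c i * f i = (\sum_i p i * f i) * Wa - Pa * \sum_i w i * f i.
  rewrite mulr_suml mulr_sumr -sumrB.
  by apply: eq_bigr => i _; rewrite /c; ring.
pose b i := if (a i == lo) || (a i == hi) then a i
            else if 0 <= c i then hi else lo.
exists b; split.
- move=> i; rewrite /b; case: eqP => [-> | _]; first by left.
  by case: eqP => [-> | _]; [right | case: (0 <= c i); [right | left]].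
- by move=> i ai; rewrite /b ai eqxx.
- by move=> i ai; rewrite /b ai eqxx orbT.
have c_le : \sum_i c i * a i <= \sum_i c i * b i.
  apply: ler_sum => i _; rewrite /b; case: ifP => // _.
  have /andP[lo_a a_hi] := a_bound i.
  case: (lerP 0 (c i)) => c_sign; first by rewrite ler_wpM2l.
  by rewrite ler_wnM2l // ltW.
by move: c_le; rewrite !c_sum subrr subr_ge0.
Qed.

End ExtremeProfile.

Section Ratios.
Context {R : realFieldType} {n : nat}.
Implicit Types x y u v p w : 'I_n.+1 -> R.

Lemma dotp_gt0 x y : posvec x -> posvec y -> 0 < dotp x y.
Proof.
move=> px py; rewrite /dotp big_ord_recl ltr_pwDl ?mulr_gt0 //.
by apply: sumr_ge0 => i _; rewrite ltW ?mulr_gt0.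
Qed.

Lemma dotpC x y : dotp x y = dotp y x.
Proof. by apply: eq_bigr => i _; rewrite mulrC. Qed.

Lemma ratio_bounds x y i : sminus x y <= y i / x i <= splus x y.
Proof. by rewrite bigmin_le le_bigmax. Qed.

Lemma sminus_le_splus x y : sminus x y <= splus x y.
Proof. by case/andP: (ratio_bounds x y ord0); apply: le_trans. Qed.

Lemma sminus_gt0 x y : posvec x -> posvec y -> 0 < sminus x y.
Proof.
move=> px py; rewrite /sminus.
by have [j ->] := bigmin_ord_attained (fun i => y i / x i); rewrite divr_gt0.
Qed.

Lemma extreme_rescaling x y p w : posvec x -> posvec y ->
  exists ys : 'I_n.+1 -> R,
    [/\ posvec ys,
        splus x ys = splus x y /\ sminus x ys = sminus x y,
        forall i, ys i / x i = sminus x y \/ ys i / x i = splus x y &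
        dotp y p * dotp ys w <= dotp ys p * dotp y w].
Proof.
move=> px py; pose a i := y i / x i.
have x_neq0 i : x i != 0 by rewrite gt_eqF.
have [b [b_ext b_lo b_hi cross]] :=
  exists_extreme_profile (fun i => x i * p i) (fun i => x i * w i) a _ _
    (ratio_bounds x y).
pose ys i := b i * x i.
have ysx i : ys i / x i = b i by rewrite mulfK.
have dotp_scaled f z : dotp (fun i => f i * x i) z = \sum_i x i * z i * f i.
  by apply: eq_bigr => i _; ring.
have dotp_y z : dotp y z = \sum_i x i * z i * a i.
  by apply: eq_bigr => i _; rewrite /a; field.
have lo_le_hi := sminus_le_splus x y.
exists ys; split.
- move=> i; apply: mulr_gt0; last exact: px.
  have lo_gt0 := sminus_gt0 x y px py.
  by case: (b_ext i) => ->; last exact: lt_le_trans lo_le_hi.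
- split.
  + have [j aj] := bigmax_ord_attained a.
    apply: (bigmax_ord_eq _ j) => [i | ]; rewrite ysx.
      by case: (b_ext i) => ->; rewrite ?lo_le_hi.
    exact/b_hi/esym.
  + have [j aj] := bigmin_ord_attained a.
    apply: (bigmin_ord_eq _ j) => [i | ]; rewrite ysx.
      by case: (b_ext i) => ->; rewrite ?lo_le_hi.
    exact/b_lo/esym.
- by move=> i; rewrite ysx.
by rewrite !dotp_y !dotp_scaled.
Qed.

Lemma Fd_sym x y u v : Fd x y u v = Fd u v x y.
Proof.
rewrite /Fd (dotpC u x) (dotpC v y) (dotpC u y) (dotpC v x).
by rewrite [dotp y u * _]mulrC.
Qed.

Lemma Fd_le_cross x y u v y' :
  posvec x -> posvec y -> posvec u -> posvec v -> posvec y' ->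
  dotp y v * dotp y' u <= dotp y' v * dotp y u -> Fd x y u v <= Fd x y' u v.
Proof.
move=> px py pu pv py' cross; have dp := dotp_gt0.
rewrite /Fd ler_pdivrMr ?mulr_gt0 ?dp // mulrAC ler_pdivlMr ?mulr_gt0 ?dp //.
rewrite -!mulrA ler_pM2l ?dp // [X in X <= _]mulrCA [X in _ <= X]mulrCA.
by rewrite ler_pM2l ?dp // mulrC [dotp y u * _]mulrC.
Qed.

End Ratios.

Theorem mainTheorem6 (R : realFieldType) (n : nat) (x y u v : 'I_n.+1 -> R) :
  posvec x -> posvec y -> posvec u -> posvec v ->
  exists ys vs : 'I_n.+1 -> R,
    posvec ys /\ posvec vs /\
    Fd x y u v <= Fd x ys u vs /\
    (splus x ys = splus x y /\ sminus x ys = sminus x y) /\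
    (splus u vs = splus u v /\ sminus u vs = sminus u v) /\
    (forall i : 'I_n.+1,
       (ys i / x i = sminus x y \/ ys i / x i = splus x y) /\
       (vs i / u i = sminus u v \/ vs i / u i = splus u v)).
Proof.
move=> px py pu pv.
have [ys [pys [ys_max ys_min] ys_ratio ys_cross]] :=
  extreme_rescaling x y v u px py.
have [vs [pvs [vs_max vs_min] vs_ratio vs_cross]] :=
  extreme_rescaling u v ys x pu pv.
exists ys, vs; do !split => //.
have y_step : Fd x y u v <= Fd x ys u v by apply: Fd_le_cross.
have v_step : Fd x ys u v <= Fd x ys u vs.
  by rewrite Fd_sym [Fd x ys u vs]Fd_sym; apply: Fd_le_cross.
exact: le_trans y_step v_step.
Qed.
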